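(* Let $0\le \mu<L<\infty$, $q=\mu/L$, and let $f\in\mathcal{F}_{\mu,L}(\mathbb{R}^d)$ admit a minimizer $x_\star$, with $f_\star=f(x_\star)$. For any $x_0=z_0\in\mathbb{R}^d$ and any integer $N\ge 1$, the iterates of the Information-Theoretic Exact Method (ITEM) satisfy \[ \|z_N-x_\star\|^2 \le \frac{1}{1+qA_N}\|z_0-x_\star\|^2\le \frac{(1-\sqrt{q})^{2N}}{(1-\sqrt{q})^{2N}+q}\|z_0-x_\star\|^2, \] \[ \psi_N \le \frac{L}{(1-q)A_{N+1}}\|z_0-x_\star\|^2\le \min\left\{(1-\sqrt{q})^{2(N+1)},\frac{1}{(N+1)^2}\right\}\frac{L}{1-q}\|z_0-x_\star\|^2, \] where $\psi_k=f(y_k)-f_\star-\tfrac{1}{2L}\|\nabla f(y_k)\|^2-\tfrac{\mu}{2(1-\mu/L)}\|y_k-\tfrac1L\nabla f(y_k)-x_\star\|^2$, and moreover $\psi_k\ge 0$.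
   Context: $\mathcal{F}_{\mu,L}(\mathbb{R}^d)$ denotes the set of proper closed convex functions $f:\mathbb{R}^d\to\mathbb{R}$ such that for all $x,y$: $f(x)\le f(y)+\langle\nabla f(y);x-y\rangle+\frac L2\|x-y\|^2$ and $f(x)\ge f(y)+\langle\nabla f(y);x-y\rangle+\frac\mu2\|x-y\|^2$. ITEM: given $x_0$, set $z_0=x_0$, $A_0=0$, $q=\mu/L$, and for $k=0,1,\dots$: $A_{k+1}=\frac{(1+q)A_k+2\left(1+\sqrt{(1+A_k)(1+qA_k)}\right)}{(1-q)^2}$, $\beta_k=\frac{A_k}{(1-q)A_{k+1}}$, $\delta_k=\frac12\frac{(1-q)^2A_{k+1}-(1+q)A_k}{1+q+qA_k}$, $y_k=(1-\beta_k)z_k+\beta_k x_k$, $x_{k+1}=y_k-\frac1L\nabla f(y_k)$, $z_{k+1}=(1-q\delta_k)z_k+q\delta_k y_k-\frac{\delta_k}{L}\nabla f(y_k)$. *)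

From HB Require Import structures.
From mathcomp Require Import all_boot all_order all_algebra.
From mathcomp Require Import all_classical all_reals all_analysis.
Set Implicit Arguments. Unset Strict Implicit. Unset Printing Implicit Defensive.
Import Order.TTheory GRing.Theory Num.Theory.
Import numFieldNormedType.Exports.
Local Open Scope ring_scope.

Definition dot (R : realType) (d : nat) (u v : 'rV[R]_d) : R :=
  \sum_(i < d) u ord0 i * v ord0 i.

Definition sqnorm (R : realType) (d : nat) (u : 'rV[R]_d) : R := dot u u.

Definition is_gradient (R : realType) (d : nat)
  (f : 'rV[R]_d -> R) (g : 'rV[R]_d -> 'rV[R]_d) : Prop :=
  forall x : 'rV[R]_d, differentiable f x /\
    forall v : 'rV[R]_d, 'd f x v = dot (g x) v.

Definition convex_fun (R : realType) (d : nat) (f : 'rV[R]_d -> R) : Prop :=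
  forall (x y : 'rV[R]_d) (t : R), 0 <= t -> t <= 1 ->
    f ((1 - t) *: x + t *: y) <= (1 - t) * f x + t * f y.

(* f \in F_{mu,L}(R^d), with gradient g.  (f is real-valued hence proper;
   differentiable hence continuous, hence closed.) *)
Definition in_F (R : realType) (d : nat) (mu L : R)
  (f : 'rV[R]_d -> R) (g : 'rV[R]_d -> 'rV[R]_d) : Prop :=
  [/\ is_gradient f g, convex_fun f &
    forall x y : 'rV[R]_d,
      f x <= f y + dot (g y) (x - y) + L / 2 * sqnorm (x - y) /\
      f y + dot (g y) (x - y) + mu / 2 * sqnorm (x - y) <= f x].

Fixpoint item_A (R : realType) (q : R) (k : nat) : R :=
  match k with
  | 0%N => 0
  | k'.+1 =>
      let a := item_A q k' in
      ((1 + q) * a + 2 * (1 + Num.sqrt ((1 + a) * (1 + q * a)))) / (1 - q) ^+ 2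
  end.

Definition item_beta (R : realType) (q : R) (k : nat) : R :=
  item_A q k / ((1 - q) * item_A q k.+1).

Definition item_delta (R : realType) (q : R) (k : nat) : R :=
  (1 / 2) * (((1 - q) ^+ 2 * item_A q k.+1 - (1 + q) * item_A q k)
              / (1 + q + q * item_A q k)).

Fixpoint item_xz (R : realType) (d : nat) (mu L : R)
  (g : 'rV[R]_d -> 'rV[R]_d) (x0 : 'rV[R]_d) (k : nat) : 'rV[R]_d * 'rV[R]_d :=
  match k with
  | 0%N => (x0, x0)
  | k'.+1 =>
      let q := mu / L in
      let xk := (item_xz mu L g x0 k').1 in
      let zk := (item_xz mu L g x0 k').2 in
      let b := item_beta q k' in
      let dl := item_delta q k' in
      let yk := (1 - b) *: zk + b *: xk in
      (yk - L^-1 *: g yk,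
       (1 - q * dl) *: zk + (q * dl) *: yk - (dl / L) *: g yk)
  end.

Definition item_x (R : realType) (d : nat) (mu L : R)
  (g : 'rV[R]_d -> 'rV[R]_d) (x0 : 'rV[R]_d) (k : nat) : 'rV[R]_d :=
  (item_xz mu L g x0 k).1.

Definition item_z (R : realType) (d : nat) (mu L : R)
  (g : 'rV[R]_d -> 'rV[R]_d) (x0 : 'rV[R]_d) (k : nat) : 'rV[R]_d :=
  (item_xz mu L g x0 k).2.

Definition item_y (R : realType) (d : nat) (mu L : R)
  (g : 'rV[R]_d -> 'rV[R]_d) (x0 : 'rV[R]_d) (k : nat) : 'rV[R]_d :=
  let b := item_beta (mu / L) k in
  (1 - b) *: item_z mu L g x0 k + b *: item_x mu L g x0 k.

Definition item_psi (R : realType) (d : nat) (mu L : R)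
  (f : 'rV[R]_d -> R) (g : 'rV[R]_d -> 'rV[R]_d) (x0 xstar : 'rV[R]_d)
  (k : nat) : R :=
  let yk := item_y mu L g x0 k in
  f yk - f xstar - 1 / (2 * L) * sqnorm (g yk)
  - mu / (2 * (1 - mu / L)) * sqnorm (yk - L^-1 *: g yk - xstar).

(* ITEM is analysed through the potential
     Phi_k = (1 + q A_k) |z_k - x*|^2 + (1 - q) A_k / L * psi_(k-1).
   Every psi_k is a gap in the interpolation inequality of F_(mu,L)
     f x >= f y + <g y, x - y> + |g x - g y|^2 / (2L)
            + mu / (2 (1 - q)) |x - y - (g x - g y) / L|^2
   between y_k and x*, hence nonnegative.  Adding to Phi_(k+1) the
   interpolation gaps of the pairs (y_(k-1), y_k) and (x*, y_k), weighted by
   (1 - q) A_k / L and (1 - q) (A_(k+1) - A_k) / L, gives exactly Phi_k: the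
   remainder is a quadratic form whose coefficients vanish by the choice of
   A_(k+1) and delta_k.  So Phi_N <= Phi_0 = |z_0 - x*|^2, which yields both
   rates; the growth estimates A_k >= k^2 and A_(k+1) (1 - sqrt q)^(2(k+1)) >= 1
   turn them into the explicit bounds. *)

From HB Require Import structures.
From mathcomp Require Import all_boot all_order all_algebra.
From mathcomp Require Import all_classical all_reals all_analysis.
From mathcomp Require Import ring lra.
Import Order.TTheory GRing.Theory Num.Theory.
Import numFieldNormedType.Exports.
Local Open Scope ring_scope.
Set Implicit Arguments.
Unset Strict Implicit.

Ltac by_coordinates :=
  rewrite /sqnorm /dot ?mulrDr ?mulrN ?opprD !mulr_sumr -?sumrN -!big_split /=;
  apply: big1 => i _; rewrite !mxE.

Section Euclidean.
Variables (R : realType) (d : nat).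
Implicit Types u v : 'rV[R]_d.

Lemma dot0l v : dot 0 v = 0.
Proof. by rewrite /dot big1 // => i _; rewrite mxE mul0r. Qed.

Lemma sqnorm_ge0 u : 0 <= sqnorm u.
Proof. by rewrite /sqnorm /dot sumr_ge0 // => i _; rewrite -expr2 sqr_ge0. Qed.

Lemma sqnorm_eq0 u : sqnorm u = 0 -> u = 0.
Proof.
move=> u0; apply/rowP => j; rewrite mxE.
have nonneg (i : 'I_d) : true -> 0 <= u ord0 i * u ord0 i.
  by rewrite -expr2 sqr_ge0.
have /eqP := psumr_eq0P nonneg u0 (i := j) isT.
by rewrite mulf_eq0 orbb => /eqP.
Qed.

End Euclidean.

Definition interp_quad (R : realType) (d : nat) (mu L : R) (x y gx gy : 'rV[R]_d) : R :=
  dot gy (x - y) + 1 / (2 * L) * sqnorm (gx - gy)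
  + mu / (2 * (1 - mu / L)) * sqnorm (x - y - L^-1 *: (gx - gy)).

Section SmoothStronglyConvex.
Variables (R : realType) (d : nat) (mu L : R).
Variables (f : 'rV[R]_d -> R) (g : 'rV[R]_d -> 'rV[R]_d).
Hypotheses (mu_ge0 : 0 <= mu) (mu_lt_L : mu < L) (fF : in_F mu L f g).

Lemma L_gt0 : 0 < L.
Proof. exact: le_lt_trans mu_lt_L. Qed.

(* Evaluate the two defining inequalities at the point w where the
   interpolating quadratic of the pair (x, y) is tight. *)
Lemma in_F_interpolation x y : f y + interp_quad mu L x y (g x) (g y) <= f x.
Proof.
have L0 : L != 0 by rewrite gt_eqF // L_gt0.
have Lmu0 : L - mu != 0 by rewrite subr_eq0 gt_eqF.
have [_ _ fmuL] := fF.
set w := x - (L - mu)^-1 *: (g x - g y - mu *: (x - y)).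
have [_ lower] := fmuL w y.
have [upper _] := fmuL w x.
have quadratic_part : dot (g y) (w - y) + mu / 2 * sqnorm (w - y)
    - dot (g x) (w - x) - L / 2 * sqnorm (w - x)
    - interp_quad mu L x y (g x) (g y) = 0.
  by rewrite /interp_quad; by_coordinates; field; rewrite L0 -mulrBr mulf_neq0 ?pnatr_eq0.
lra.
Qed.

Lemma minimizer_grad_eq0 xs : (forall x, f xs <= f x) -> g xs = 0.
Proof.
move=> xs_min; apply: sqnorm_eq0; apply/eqP; rewrite eq_le sqnorm_ge0 andbT.
have [_ _ fmuL] := fF.
have [upper _] := fmuL (xs - L^-1 *: g xs) xs.
have quadratic_part : dot (g xs) (xs - L^-1 *: g xs - xs)
    + L / 2 * sqnorm (xs - L^-1 *: g xs - xs) + 1 / (2 * L) * sqnorm (g xs) = 0.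
  by by_coordinates; field; rewrite gt_eqF // L_gt0.
have := xs_min (xs - L^-1 *: g xs).
have c_gt0 : 0 < 1 / (2 * L) by rewrite divr_gt0 // mulr_gt0 // L_gt0.
nra.
Qed.

End SmoothStronglyConvex.

Section Coefficients.
Variables (R : realType) (q : R).
Hypotheses (q_ge0 : 0 <= q) (q_lt1 : q < 1).

Local Notation A := (item_A q).
Local Notation root k := (Num.sqrt ((1 + A k) * (1 + q * A k))).

(* lra and nra ignore section hypotheses, hence the local copies of
   q_ge0 and q_lt1 in some proofs below. *)

Lemma item_A_ge0 k : 0 <= A k.
Proof.
have q1 := q_lt1.
elim: k => [|k IH] //=; apply: divr_ge0; last exact: sqr_ge0.
by rewrite addr_ge0 ?mulr_ge0 ?addr_ge0 ?sqrtr_ge0 //; lra.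
Qed.

Lemma item_root_sqr k : root k ^+ 2 = (1 + A k) * (1 + q * A k).
Proof.
by have A0 := item_A_ge0 k; rewrite sqr_sqrtr // mulr_ge0 ?addr_ge0 ?mulr_ge0.
Qed.

Lemma item_root_ge1 k : 1 <= root k.
Proof.
have A0 := item_A_ge0 k; have qA0 := mulr_ge0 q_ge0 A0.
have : 1 <= root k ^+ 2 by rewrite item_root_sqr; nra.
have := sqrtr_ge0 ((1 + A k) * (1 + q * A k)).
nra.
Qed.

Lemma item_A_succ_ge k : A k + 2 + 2 * root k <= A k.+1.
Proof.
have q0 := q_ge0; have q1 := q_lt1.
have A0 := item_A_ge0 k; have s1 := item_root_ge1 k.
rewrite /= ler_pdivlMr ?exprn_gt0 ?subr_gt0 //.
have : 0 <= (A k + 2 + 2 * root k) * (q * (2 - q)).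
  by rewrite !mulr_ge0 //; lra.
have := mulr_ge0 q_ge0 A0.
nra.
Qed.

Lemma item_A_le_succ k : A k <= A k.+1.
Proof. by have := item_A_succ_ge k; have := item_root_ge1 k; lra. Qed.

Lemma item_A_gt0 k : 0 < A k.+1.
Proof. by have := item_A_succ_ge k; have := item_root_ge1 k; have := item_A_ge0 k; lra. Qed.

Lemma item_A_ge_sqr k : k%:R ^+ 2 <= A k.
Proof.
elim: k => [|k IH]; first by rewrite expr0n /= lexx.
have k_le_root : k%:R <= root k.
  have A0 := item_A_ge0 k; have s1 := item_root_ge1 k; have k0 := ler0n R k.
  have qA0 := mulr_ge0 q_ge0 A0; have qAA0 := mulr_ge0 qA0 A0.
  have : 1 + A k <= root k ^+ 2 by rewrite item_root_sqr; nra.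
  nra.
by have := item_A_succ_ge k; rewrite -natr1; nra.
Qed.

(* With t = sqrt q we have (1 - q)^2 A_{k+1} = (1 + q) A_k + 2 + 2 root_k,
   and root_k >= max (1, t A_k). *)
Lemma item_A_succ_scaled k :
  A k <= A k.+1 * (1 - Num.sqrt q) ^+ 2 /\ 1 <= A k.+1 * (1 - Num.sqrt q) ^+ 2.
Proof.
set t := Num.sqrt q.
have t0 : 0 <= t by apply: sqrtr_ge0.
have tq : t ^+ 2 = q by rewrite sqr_sqrtr.
have t1 : t < 1 by rewrite /t -sqrtr1 ltr_sqrt.
have A0 := item_A_ge0 k; have s1 := item_root_ge1 k; have s2 := item_root_sqr k.
have tA_le_root : t * A k <= root k.
  have tA0 : 0 <= t * A k by apply: mulr_ge0.
  rewrite -ler_sqr ?nnegrE ?sqrtr_ge0 // s2 exprMn tq; nra.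
have sqr_1mq : (1 - t) ^+ 2 * (1 + t) ^+ 2 = (1 - q) ^+ 2 by rewrite -tq; ring.
have scaled : A k.+1 * (1 - t) ^+ 2 * (1 + t) ^+ 2 = (1 + q) * A k + 2 + 2 * root k.
  rewrite -mulrA sqr_1mq /= divfK; first ring.
  by rewrite expf_neq0 // subr_eq0 eq_sym lt_eqF.
have sqr1t : (1 + t) ^+ 2 = 1 + 2 * t + q by rewrite -tq; ring.
have p0 : 0 < (1 + t) ^+ 2 by rewrite exprn_gt0 //; lra.
have qA0 := mulr_ge0 q_ge0 A0; have q1 := q_lt1.
by split; rewrite -(ler_pM2r p0) scaled sqr1t; nra.
Qed.

Lemma item_A_geometric k : 1 <= A k.+1 * (1 - Num.sqrt q) ^+ (2 * k.+1).
Proof.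
elim: k => [|k IH]; first by have [_] := item_A_succ_scaled 0; rewrite muln1.
rewrite mulnS exprD mulrA; apply: le_trans IH _.
have [step _] := item_A_succ_scaled k.+1.
apply: ler_wpM2r step.
by rewrite exprn_ge0 // subr_ge0 -sqrtr1 ler_sqrt // ltW.
Qed.

Lemma item_delta_identities k :
  let dl := item_delta q k in
  [/\ (1 + q * A k) - (1 + q * A k.+1) * (1 - q * dl) ^+ 2 = 0,
      2 * dl * (1 - q * dl) * (1 + q * A k.+1) - ((1 - q) * A k.+1 - A k) = 0 &
      A k.+1 - (1 + q * A k.+1) * dl ^+ 2 = 0].
Proof.
rewrite /item_delta /=; have := item_root_sqr k; have := item_A_ge0 k.
move: (A k) (root k) => a s a0 s2.
have qa0 := mulr_ge0 q_ge0 a0.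
have den0 : 1 + q + q * a != 0 by rewrite gt_eqF //; have := q_ge0; lra.
have q1 : 1 - q != 0 by rewrite subr_eq0 eq_sym lt_eqF.
set a1 := (_ / (1 - q) ^+ 2); set dl := 1 / 2 * _.
(* Each expression is a multiple of s^2 - (1 + a) (1 + q a). *)
have -> : (1 + q * a) - (1 + q * a1) * (1 - q * dl) ^+ 2 =
  (3*q^+2 - 2*q^+3*s + 3*q^+3*a - q^+4 - q^+4*a) * (s^+2 - (1+a)*(1+q*a))
   / ((1-q)^+2 * (1+q+q*a)^+2).
  by rewrite /dl /a1; field; rewrite den0 q1.
have -> : 2 * dl * (1 - q * dl) * (1 + q * a1) - ((1 - q) * a1 - a) =
  (2*q - 4*q^+2 - 4*q^+2*s + 2*q^+2*a - 2*q^+3 - 2*q^+3*a) * (s^+2 - (1+a)*(1+q*a))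
   / ((1-q)^+2 * (1+q+q*a)^+2).
  by rewrite /dl /a1; field; rewrite den0 q1.
have -> : a1 - (1 + q * a1) * dl ^+ 2 =
  (-1 - 4*q - 2*q*s - q*a - q^+2 - q^+2*a) * (s^+2 - (1+a)*(1+q*a))
   / ((1-q)^+2 * (1+q+q*a)^+2).
  by rewrite /dl /a1; field; rewrite den0 q1.
by rewrite s2 subrr !mulr0 !mul0r.
Qed.

End Coefficients.

Section Potential.
Variables (R : realType) (d : nat) (mu L : R).
Hypotheses (mu_ge0 : 0 <= mu) (mu_lt_L : mu < L).

Local Notation q := (mu / L).
Local Notation A := (item_A q).
Local Notation Q := (interp_quad mu L).

Lemma item_q_ge0 : 0 <= q.
Proof. by rewrite divr_ge0 // ltW // (L_gt0 mu_ge0). Qed.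

Lemma item_q_lt1 : q < 1.
Proof. by rewrite ltr_pdivrMr ?mul1r // (L_gt0 mu_ge0). Qed.

Lemma item_weight_ge0 a : 0 <= a -> 0 <= (1 - q) * a / L.
Proof.
have L0 := L_gt0 mu_ge0 mu_lt_L; have q1 := item_q_lt1.
by move=> a0; rewrite divr_ge0 ?mulr_ge0 // ?subr_ge0 ltW.
Qed.

Lemma item_beta_mul k : item_beta q k * ((1 - q) * A k.+1) = A k.
Proof.
rewrite /item_beta divfK // mulf_neq0 // gt_eqF ?subr_gt0 ?item_q_lt1 //.
exact: item_A_gt0 item_q_ge0 item_q_lt1 k.
Qed.

(* Both sides differ by a quadratic form in Z = z - xs and
   V = gy / L - q (y - xs) whose coefficients are the three expressions
   of item_delta_identities. *)
Lemma potential_quadratic_identity k (x y z z1 hp gy xs : 'rV[R]_d) :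
  y = (1 - item_beta q k) *: z + item_beta q k *: x ->
  z1 = (1 - q * item_delta q k) *: z + (q * item_delta q k) *: y
       - (item_delta q k / L) *: gy ->
  (1 + q * A k.+1) * sqnorm (z1 - xs) - (1 + q * A k) * sqnorm (z - xs) =
  (1 - q) * A k.+1 / L * Q y xs gy 0 + (1 - q) * A k / L * Q (x + L^-1 *: hp) y hp gy
  + (1 - q) * (A k.+1 - A k) / L * Q xs y 0 gy
  - (1 - q) * A k / L * Q (x + L^-1 *: hp) xs hp 0.
Proof.
have L0 : L != 0 by rewrite gt_eqF // (L_gt0 mu_ge0).
have Lmu0 : L - mu != 0 by rewrite subr_eq0 gt_eqF.
have [c1 c2 c3] := item_delta_identities item_q_ge0 item_q_lt1 k.
have hb := item_beta_mul k.
move=> -> ->; move: (item_beta q k) (item_delta q k) (A k) (A k.+1) c1 c2 c3 hb.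
move=> b dl a a1 c1 c2 c3 hb.
apply/eqP; rewrite -subr_eq0; apply/eqP; rewrite /interp_quad.
by_coordinates.
set Z := z ord0 i - xs ord0 i.
set V := gy ord0 i / L - mu / L * ((1 - b) * z ord0 i + b * x ord0 i - xs ord0 i).
transitivity (- ((1 + q * a) - (1 + q * a1) * (1 - q * dl) ^+ 2) * Z ^+ 2
  - (2 * dl * (1 - q * dl) * (1 + q * a1) - ((1 - q) * a1 - a)) * Z * V
  - (a1 - (1 + q * a1) * dl ^+ 2) * V ^+ 2); last by rewrite c1 c2 c3; ring.
rewrite /Z /V -hb; field.
by rewrite L0 -mulrBr mulf_neq0 ?pnatr_eq0.
Qed.

End Potential.

Section Iterates.
Variables (R : realType) (d : nat) (mu L : R).
Variables (f : 'rV[R]_d -> R) (g : 'rV[R]_d -> 'rV[R]_d) (xs x0 : 'rV[R]_d).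
Hypotheses (mu_ge0 : 0 <= mu) (mu_lt_L : mu < L) (fF : in_F mu L f g)
  (xs_min : forall x, f xs <= f x).

Local Notation q := (mu / L).
Local Notation A := (item_A q).
Local Notation Q := (interp_quad mu L).
Local Notation X := (item_x mu L g x0).
Local Notation Y := (item_y mu L g x0).
Local Notation Z := (item_z mu L g x0).
Local Notation psi := (item_psi mu L f g x0 xs).

Lemma item_x_succ k : X k.+1 = Y k - L^-1 *: g (Y k).
Proof. by []. Qed.

(* At k = 0 the junk term psi 0 is killed by A 0 = 0. *)
Definition potential k :=
  (1 + q * A k) * sqnorm (Z k - xs) + (1 - q) * A k / L * psi k.-1.

Lemma item_psi_E k : psi k = f (Y k) - f xs - Q (Y k) xs (g (Y k)) (g xs).
Proof.
rewrite (minimizer_grad_eq0 mu_ge0 mu_lt_L fF xs_min).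
by rewrite /item_psi /interp_quad dot0l subr0 add0r (addrAC (Y k)); ring.
Qed.

Lemma item_psi_ge0 k : 0 <= psi k.
Proof. by rewrite item_psi_E subr_ge0 lerBrDl in_F_interpolation. Qed.

Lemma potential_succ_le k : potential k.+1 <= potential k.
Proof.
have q0 := item_q_ge0 mu_ge0 mu_lt_L; have q1 := item_q_lt1 mu_ge0 mu_lt_L.
have weight_ge0 := item_weight_ge0 mu_ge0 mu_lt_L.
have gxs0 := minimizer_grad_eq0 mu_ge0 mu_lt_L fF xs_min.
set yp := X k + L^-1 *: g (Y k.-1).
have identity := potential_quadratic_identity mu_ge0 mu_lt_L (k := k) (x := X k)
  (y := Y k) (z := Z k) (z1 := Z k.+1) (gy := g (Y k)) (g (Y k.-1)) xs erefl erefl.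
have prev_gap : 0 <= (1 - q) * A k / L
    * (f (Y k.-1) - f (Y k) - Q yp (Y k) (g (Y k.-1)) (g (Y k))).
  case: k @yp {identity} => [|k] yp; first by rewrite /= !(mulr0, mul0r).
  rewrite /yp succnK item_x_succ subrK mulr_ge0 ?weight_ge0 ?item_A_ge0 //.
  by rewrite subr_ge0 lerBrDl in_F_interpolation.
have xs_gap : 0 <= (1 - q) * (A k.+1 - A k) / L
    * (f xs - f (Y k) - Q xs (Y k) 0 (g (Y k))).
  rewrite mulr_ge0 ?weight_ge0 ?subr_ge0 ?item_A_le_succ //.
  by rewrite -gxs0 lerBrDl in_F_interpolation.
have psi_prev : (1 - q) * A k / L * psi k.-1
    = (1 - q) * A k / L * (f (Y k.-1) - f xs - Q yp xs (g (Y k.-1)) 0).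
  case: k @yp {identity prev_gap xs_gap} => [|k] yp; first by rewrite /= !(mulr0, mul0r).
  by rewrite /yp succnK item_x_succ subrK item_psi_E gxs0.
rewrite /potential psi_prev succnK item_psi_E gxs0.
lra.
Qed.

Lemma potential_le k : potential k <= sqnorm (x0 - xs).
Proof.
elim: k => [|k IH]; last exact: le_trans (potential_succ_le k) IH.
by rewrite /potential /= !(mulr0, mul0r, addr0, mul1r).
Qed.

Lemma item_z_rate N : sqnorm (Z N - xs) <= sqnorm (x0 - xs) / (1 + q * A N).
Proof.
have q0 := item_q_ge0 mu_ge0 mu_lt_L; have q1 := item_q_lt1 mu_ge0 mu_lt_L.
have qA_ge0 := mulr_ge0 q0 (item_A_ge0 q0 q1 N).
have psi_term := mulr_ge0 (item_weight_ge0 mu_ge0 mu_lt_L (item_A_ge0 q0 q1 N))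
  (item_psi_ge0 N.-1).
have := potential_le N; rewrite ler_pdivlMr /potential; lra.
Qed.

Lemma item_psi_rate N : psi N <= L / ((1 - q) * A N.+1) * sqnorm (x0 - xs).
Proof.
have q0 := item_q_ge0 mu_ge0 mu_lt_L; have q1 := item_q_lt1 mu_ge0 mu_lt_L.
have L0 := L_gt0 mu_ge0 mu_lt_L.
have coef_gt0 : 0 < (1 - q) * A N.+1 / L.
  by apply: divr_gt0 => //; apply: mulr_gt0; [rewrite subr_gt0 | exact: item_A_gt0].
have z_term_ge0 : 0 <= (1 + q * A N.+1) * sqnorm (Z N.+1 - xs).
  by rewrite mulr_ge0 ?sqnorm_ge0 // addr_ge0 // mulr_ge0 // ltW // item_A_gt0.
have -> : L / ((1 - q) * A N.+1) * sqnorm (x0 - xs)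
    = sqnorm (x0 - xs) / ((1 - q) * A N.+1 / L).
  by rewrite invf_div mulrC.
have := potential_le N.+1; rewrite ler_pdivlMr // /potential mulrC; lra.
Qed.

End Iterates.

Section Rates.
Variable R : realType.

Lemma le_geometric_rate (q r a P : R) : 0 <= q -> 0 <= r -> 0 < P -> 1 <= a * P ->
  r / (1 + q * a) <= P / (P + q) * r.
Proof.
move=> q0 r0 P0 aP1.
have a0 : 0 < a by rewrite -(pmulr_lgt0 _ P0); lra.
have qa_ge0 : 0 <= q * a by rewrite mulr_ge0 // ltW.
have Pq_gt0 : 0 < P + q by lra.
have qa1_gt0 : 0 < 1 + q * a by lra.
rewrite -subr_ge0.
have -> : P / (P + q) * r - r / (1 + q * a)
    = r * q * (a * P - 1) / ((P + q) * (1 + q * a)).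
  by field; rewrite !gt_eqF.
by rewrite divr_ge0 ?mulr_ge0 ?subr_ge0 // ltW // mulr_gt0.
Qed.

Lemma invr_le_min (a P n : R) : 0 < n -> 1 <= a * P -> n ^+ 2 <= a ->
  a^-1 <= Num.min P (1 / n ^+ 2).
Proof.
move=> n0 aP1 n2a.
have n2_gt0 : 0 < n ^+ 2 by rewrite exprn_gt0.
have a0 : 0 < a by apply: lt_le_trans n2a.
rewrite le_min -div1r ler_pdivrMr // mulrC aP1 /=.
by rewrite !div1r lef_pV2 ?posrE.
Qed.

End Rates.

Theorem theorem3 (R : realType) (d : nat) (mu L : R)
  (f : 'rV[R]_d -> R) (g : 'rV[R]_d -> 'rV[R]_d) (xstar x0 : 'rV[R]_d) (N : nat) :
  0 <= mu -> mu < L ->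
  in_F mu L f g ->
  (forall x : 'rV[R]_d, f xstar <= f x) ->
  (1 <= N)%N ->
  let q := mu / L in
  let r0 := sqnorm (x0 - xstar) in
  [/\ sqnorm (item_z mu L g x0 N - xstar) <= r0 / (1 + q * item_A q N),
      r0 / (1 + q * item_A q N)
        <= (1 - Num.sqrt q) ^+ (2 * N) / ((1 - Num.sqrt q) ^+ (2 * N) + q) * r0,
      item_psi mu L f g x0 xstar N <= L / ((1 - q) * item_A q N.+1) * r0,
      L / ((1 - q) * item_A q N.+1) * r0
        <= Num.min ((1 - Num.sqrt q) ^+ (2 * N.+1)) (1 / (N.+1%:R) ^+ 2)
           * (L / (1 - q)) * r0
    & forall k : nat, 0 <= item_psi mu L f g x0 xstar k].
Proof.
move=> mu_ge0 mu_lt_L fF xs_min N_ge1 q r0; rewrite {}/q {}/r0.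
have q0 := item_q_ge0 mu_ge0 mu_lt_L; have q1 := item_q_lt1 mu_ge0 mu_lt_L.
have L0 := L_gt0 mu_ge0 mu_lt_L.
have r0_ge0 := sqnorm_ge0 (x0 - xstar).
have rate_gt0 k : 0 < (1 - Num.sqrt (mu / L)) ^+ k.
  by rewrite exprn_gt0 // subr_gt0 -sqrtr1 ltr_sqrt.
case: N N_ge1 => // n _; split.
- exact: (item_z_rate x0 mu_ge0 mu_lt_L fF xs_min n.+1).
- exact: le_geometric_rate q0 r0_ge0 (rate_gt0 _) (item_A_geometric q0 q1 n).
- exact: (item_psi_rate x0 mu_ge0 mu_lt_L fF xs_min n.+1).
- have A_gt0 := item_A_gt0 q0 q1 n.+1.
  have -> : L / ((1 - mu / L) * item_A (mu / L) n.+2) * sqnorm (x0 - xstar)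
      = (item_A (mu / L) n.+2)^-1 * (L / (1 - mu / L)) * sqnorm (x0 - xstar).
    by field; rewrite !gt_eqF ?subr_gt0.
  apply: (ler_wpM2r r0_ge0); apply: ler_wpM2r; first by rewrite divr_ge0 ?subr_ge0 ?ltW.
  exact: invr_le_min (item_A_geometric q0 q1 n.+1) (item_A_ge_sqr q0 q1 n.+2).
- exact: (item_psi_ge0 x0 mu_ge0 mu_lt_L fF xs_min).
Qed.
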